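(* Let $\mathcal A$ be a Banach algebra such that $\mathcal A^{**}$, with the first Arens product, is super weakly amenable. Then (i) the linear span of $\{ab:a,b\in\mathcal A\}$ is dense in $\mathcal A$; and (ii) there are no nonzero continuous point derivations on $\mathcal A$: for every nonzero continuous multiplicative linear functional $\varphi$ on $\mathcal A$, every continuous linear functional $d$ on $\mathcal A$ with $d(ab)=d(a)\varphi(b)+\varphi(a)d(b)$ for all $a,b$ is zero.
   Context: For a continuous homomorphism $\varphi:\mathcal A\to\mathcal B$, $\mathcal B_\varphi$ is $\mathcal B$ as an $\mathcal A$-bimodule with $a\cdot b=\varphi(a)b$, $b\cdot a=b\varphi(a)$, and $\mathcal B_\varphi^*$ is its dual bimodule ($\langle x,a\cdot f\rangle=\langle x\cdot a,f\rangle$, $\langle x,f\cdot a\rangle=\langle a\cdot x,f\rangle$). A derivation $d:\mathcal A\to X$ is a bounded linear map with $d(ab)=d(a)\cdot b+a\cdot d(b)$. A Banach algebra $\mathcal A$ is super weakly amenable if for every Banach algebra $\mathcal B$, every continuous homomorphism $\varphi:\mathcal A\to\mathcal B$ and every derivation $d:\mathcal A\to\mathcal B_\varphi^*$, $\langle d(a),\varphi(b)\rangle+\langle d(b),\varphi(a)\rangle=0$ for all $a,b\in\mathcal A$. *)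

From mathcomp Require Import all_boot all_algebra.
From mathcomp Require Import all_classical all_reals all_analysis.
From mathcomp Require Export complex.
Set Implicit Arguments. Unset Strict Implicit. Unset Printing Implicit Defensive.
Import GRing.Theory Num.Theory.
Local Open Scope ring_scope.
Local Open Scope classical_set_scope.

Section Defs.
Variable R : realType.
Local Notation K := R[i].

Definition banach_mul (B : normedModType K) (m : B -> B -> B) : Prop :=
  [/\ (forall (c : K) x y z, m (c *: x + y) z = c *: m x z + m y z),
      (forall (c : K) x y z, m z (c *: x + y) = c *: m z x + m z y),
      (forall x y z, m (m x y) z = m x (m y z)) &
      (forall x y, `|m x y| <= `|x| * `|y|)].

Definition linear_fun (V : lmodType K) (f : V -> K) : Prop :=
  forall (c : K) x y, f (c *: x + y) = c * f x + f y.

(* Super weak amenability of a normed algebra presented as the subspace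
   [S] of a K-module [V], with multiplication [mV] and norm given through
   the relation [nb x M] := "||x|| <= M".  A bounded derivation
   d : V -> B_phi^* is recorded as the bilinear form (x, b) |-> <d(x), b>:
   <x', d(a).b> = <b.x', d(a)> = d a (phi b * x'),
   <x', a.d(b)> = <x'.a, d(b)> = d b (x' * phi a). *)
Definition super_weakly_amenable (V : lmodType K) (S : set V)
    (nb : V -> K -> Prop) (mV : V -> V -> V) : Prop :=
  forall (B : completeNormedModType K) (mB : B -> B -> B), banach_mul mB ->
  forall phi : V -> B,
    (forall (c : K) x y, S x -> S y -> phi (c *: x + y) = c *: phi x + phi y) ->
    (forall x y, S x -> S y -> phi (mV x y) = mB (phi x) (phi y)) ->
    (exists C : K, forall x M, S x -> nb x M -> `|phi x| <= C * M) ->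
  forall d : V -> B -> K,
    (forall (c : K) x y b, S x -> S y -> d (c *: x + y) b = c * d x b + d y b) ->
    (forall x (c : K) b b', S x -> d x (c *: b + b') = c * d x b + d x b') ->
    (exists C : K, forall x M b, S x -> nb x M -> `|d x b| <= C * M * `|b|) ->
    (forall x y b, S x -> S y ->
        d (mV x y) b = d x (mB (phi y) b) + d y (mB b (phi x))) ->
  forall x y, S x -> S y -> d x (phi y) + d y (phi x) = 0.

Definition swa_banach (A : normedModType K) (mA : A -> A -> A) : Prop :=
  @super_weakly_amenable A setT (fun x M => `|x| <= M) mA.

Section Bidual.
Variables (A : normedModType K) (mA : A -> A -> A).

Definition dual_bound (f : A -> K) (N : K) : Prop :=
  forall a, `|f a| <= N * `|a|.

Definition in_dual : set (A -> K) :=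
  [set f | linear_fun f /\ exists N, dual_bound f N].

(* "||F|| <= M" for F on A^* (operator norm = least bound) *)
Definition bidual_bound (F : (A -> K) -> K) (M : K) : Prop :=
  forall f N, in_dual f -> 0 <= N -> dual_bound f N -> `|F f| <= M * N.

(* the bidual A^** : bounded linear functionals on A^*, represented as
   functions on A -> K vanishing outside A^* *)
Definition in_bidual : set ((A -> K) -> K) :=
  [set F | [/\ (forall (c : K) f g, in_dual f -> in_dual g ->
                  F (c *: f + g) = c * F f + F g),
              (exists M, bidual_bound F M) &
              (forall f, ~ in_dual f -> F f = 0)]].

(* first Arens product:  <f.a, b> = <f, ab>,  <G.f, a> = <G, f.a>,
   <F [] G, f> = <F, G.f>. *)
Definition arens1 (F G : (A -> K) -> K) : (A -> K) -> K :=
  fun f => if `[< in_dual f >] then F (fun a => G (fun b => f (mA a b))) else 0.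

Definition span_products : set A :=
  [set x | exists n (c : 'I_n -> K) (a b : 'I_n -> A),
             x = \sum_(i < n) c i *: mA (a i) (b i)].

End Bidual.

Definition bidual_swa (A : normedModType K) (mA : A -> A -> A) : Prop :=
  @super_weakly_amenable _ (@in_bidual A) (@bidual_bound A) (arens1 mA).

End Defs.

(* Both statements come from feeding one-dimensional data into super weak
   amenability of A**.  A character phi and a point derivation d at phi extend to
   F |-> F(phi) and F |-> F(d), which are again a character and a point derivation
   for the first Arens product; realising them through a rank-one algebra B gives
   d(a) phi(b) + d(b) phi(a) = 0, whence d = 0 once phi(b) = 1.  If the span of the
   products were not dense, Hahn-Banach would give f in A* vanishing on all
   products with f(x) <> 0; then F |-> F(f) is a point derivation at the zero
   character of A**, and the same identity yields 2 f(x)^2 = 0. *)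

From mathcomp Require Import all_boot all_algebra.
From mathcomp Require Import all_classical all_reals all_analysis.
From mathcomp Require Import complex order ring lra.
Import Order.TTheory GRing.Theory Num.Theory.
Import numFieldNormedType.Exports.
Set Implicit Arguments. Unset Strict Implicit. Unset Printing Implicit Defensive.
Local Open Scope ring_scope.
Local Open Scope classical_set_scope.
Local Open Scope complex_scope.

Section LinearFunctional.
Variables (R : realType) (V : lmodType R[i]) (f : V -> R[i]).
Hypothesis lf : linear_fun f.

Lemma linear_fun0 : f 0 = 0.
Proof.
have := lf 1 0 0; rewrite scale1r addr0 mul1r => /eqP.
by rewrite -subr_eq subrr eq_sym => /eqP.
Qed.

Lemma linear_funZ c x : f (c *: x) = c * f x.
Proof. by have := lf c x 0; rewrite addr0 linear_fun0 addr0. Qed.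

Lemma linear_fun_normalize a : f a != 0 -> exists b, f b = 1.
Proof. by move=> fa; exists ((f a)^-1 *: a); rewrite linear_funZ mulVf. Qed.

End LinearFunctional.

Section RealHahnBanach.
Variables (R : realType) (V : lmodType R[i]) (p : V -> R).
Hypothesis p_add : forall a b, p (a + b) <= p a + p b.
Hypothesis p_scale : forall (t : R) a, 0 <= t -> p (t%:C *: a) = t * p a.

Lemma sublinear0 : p 0 = 0.
Proof. by rewrite -(scale0r 0) -[0%R]/(0%:C) p_scale // mul0r. Qed.

Lemma sublinear_scale_ge (t : R) a : t * p a <= p (t%:C *: a).
Proof.
have [t0|t0] := leP 0 t; first by rewrite p_scale.
have := p_add (t%:C *: a) ((- t)%:C *: a).
rewrite -scalerDl -rmorphD subrr scale0r sublinear0 (p_scale (t := - t)); first lra.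
by rewrite oppr_ge0 ltW.
Qed.

(* A real-linear functional defined on a subspace is encoded by its graph. *)
Definition dominated_linear_graph (G : set (V * R)) :=
  [/\ forall u r s, G (u, r) -> G (u, s) -> r = s,
      forall u v r s t, G (u, r) -> G (v, s) -> G (t%:C *: u + v, t * r + s) &
      forall u r, G (u, r) -> r <= p u].

Definition line_graph x : set (V * R) := [set z | exists t : R, z = (t%:C *: x, t * p x)].

Lemma dominated_line_graph x : dominated_linear_graph (line_graph x).
Proof.
split.
- move=> u r s [t [-> ->]] [t' [e ->]].
  have [->|x0] := eqVneq x 0; first by rewrite sublinear0 !mulr0.
  have : (t - t')%:C *: x = 0 by rewrite rmorphB scalerBl e subrr.
  move/eqP; rewrite scaler_eq0 (negbTE x0) orbF => /eqP /complexI /eqP.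
  by rewrite subr_eq0 => /eqP ->.
- move=> u v r s t [t1 [-> ->]] [t2 [-> ->]]; exists (t * t1 + t2).
  by rewrite scalerA -scalerDl rmorphD rmorphM mulrA mulrDl.
- by move=> u r [t [-> ->]]; exact: sublinear_scale_ge.
Qed.

Lemma dominated_linear_graph_chain x (F : set (set (V * R))) :
  F `<=` (fun G => dominated_linear_graph (G `|` line_graph x)) ->
  total_on F subset ->
  dominated_linear_graph (\bigcup_(G in F) G `|` line_graph x).
Proof.
move=> FP tot; set U := \bigcup_(G in F) G `|` line_graph x.
have common z1 z2 : U z1 -> U z2 ->
    exists H, [/\ dominated_linear_graph H, H z1, H z2 & H `<=` U].
  have subU G : F G -> G `|` line_graph x `<=` U.
    by move=> FG z [Gz|Lz]; [left; exists G|right].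
  case=> [[G1 FG1 G1z]|L1]; case=> [[G2 FG2 G2z]|L2].
  - have [s12|s21] := tot _ _ FG1 FG2.
    + by exists (G2 `|` line_graph x); split; [exact: FP|left; exact: s12|left|exact: subU].
    + by exists (G1 `|` line_graph x); split; [exact: FP|left|left; exact: s21|exact: subU].
  - by exists (G1 `|` line_graph x); split; [exact: FP|left|right|exact: subU].
  - by exists (G2 `|` line_graph x); split; [exact: FP|right|left|exact: subU].
  - by exists (line_graph x); split=> //; [exact: dominated_line_graph|right].
split.
- move=> u r s h1 h2; have [H [[Hf _ _] H1 H2 _]] := common _ _ h1 h2; exact: Hf H1 H2.
- move=> u v r s t h1 h2; have [H [[_ Hc _] H1 H2 HU]] := common _ _ h1 h2.
  exact/HU/Hc.
- move=> u r h; have [H [[_ _ Hd] H1 _ _]] := common _ _ h h; exact: Hd H1.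
Qed.

Definition graph_extend (H : set (V * R)) y c : set (V * R) :=
  [set z | exists u r t, H (u, r) /\ z = (u + t%:C *: y, r + t * c)].

Section GraphExtension.
Variables (H : set (V * R)) (y : V).
Hypotheses (gH : dominated_linear_graph H) (H00 : H (0, 0)).

Lemma graph_scale u r (t : R) : H (u, r) -> H (t%:C *: u, t * r).
Proof. by case: gH => _ Hc _ Hu; have := Hc _ _ _ _ t Hu H00; rewrite !addr0. Qed.

Lemma graph_add u r v s : H (u, r) -> H (v, s) -> H (u + v, r + s).
Proof.
by case: gH => _ Hc _ Hu Hv; have := Hc _ _ _ _ 1 Hu Hv; rewrite rmorph1 scale1r mul1r.
Qed.

(* These are the two inequalities keeping the extension [y |-> c] below [p]. *)
Lemma extension_slope : exists c,
  (forall u r, H (u, r) -> r - p (u - y) <= c) /\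
  (forall v s, H (v, s) -> c <= p (v + y) - s).
Proof.
case: gH => _ _ Hd.
have key u r v s : H (u, r) -> H (v, s) -> r - p (u - y) <= p (v + y) - s.
  move=> Hu Hv; have := Hd _ _ (graph_add Hu Hv).
  have := p_add (u - y) (v + y); rewrite addrACA addNr addr0; lra.
pose E := [set z | exists u r, H (u, r) /\ z = r - p (u - y)].
have E0 : E !=set0 by exists (0 - p (0 - y)), 0, 0.
have Eub : ubound E (p (0 + y) - 0) by move=> z [u [r [Hu ->]]]; exact: key Hu H00.
exists (sup E); split.
- by move=> u r Hu; apply: (ub_le_sup (ex_intro _ _ Eub)); exists u, r.
- by move=> v s Hv; apply: ge_sup E0 _ => z [u [r [Hu ->]]]; exact: key Hu Hv.
Qed.

Lemma graph_extend_functional c : ~ (exists r, H (y, r)) ->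
  forall u r s, graph_extend H y c (u, r) -> graph_extend H y c (u, s) -> r = s.
Proof.
case: gH => Hf _ _ Hy w a b [u1 [r1 [t1 [H1 [e1 ->]]]]] [u2 [r2 [t2 [H2 [e2 ->]]]]].
have e : u1 + t1%:C *: y = u2 + t2%:C *: y by rewrite -e1 -e2.
have [t12|t12] := eqVneq t1 t2.
  by subst t2; move/addIr: e => e; subst u2; rewrite (Hf _ _ _ H1 H2).
exfalso; apply: Hy.
have e' : u1 - u2 = (t2 - t1)%:C *: y.
  have := congr1 (fun w => w - u2 - t1%:C *: y) e.
  rewrite /= addrAC addrK [u2 + _]addrC addrK => ->.
  by rewrite rmorphB scalerBl.
have := graph_scale ((t2 - t1)^-1) (graph_add H1 (graph_scale (-1) H2)).
rewrite rmorphN rmorph1 scaleN1r e' scalerA -rmorphM mulVf ?subr_eq0 1?eq_sym //.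
by rewrite rmorph1 scale1r => Hy'; eexists; exact: Hy'.
Qed.

Lemma dominated_graph_extend c : ~ (exists r, H (y, r)) ->
  (forall u r, H (u, r) -> r - p (u - y) <= c) ->
  (forall v s, H (v, s) -> c <= p (v + y) - s) ->
  dominated_linear_graph (graph_extend H y c).
Proof.
move=> Hy c_ge c_le; have [_ Hc Hd] := gH; split; first exact: graph_extend_functional.
- move=> w1 w2 a b t [u1 [r1 [t1 [H1 [-> ->]]]]] [u2 [r2 [t2 [H2 [-> ->]]]]].
  exists (t%:C *: u1 + u2), (t * r1 + r2), (t * t1 + t2); split; first exact: Hc.
  congr pair; last by ring.
  by rewrite scalerDr addrACA rmorphD scalerDl rmorphM -scalerA.
move=> w a [u [r [t [Hu [-> ->]]]]].
have [t0|t0|->] := ltgtP t 0; last first.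
- by rewrite rmorph0 scale0r addr0 mul0r addr0; exact: Hd Hu.
- have -> : u + t%:C *: y = t%:C *: (t^-1%:C *: u + y).
    by rewrite scalerDr scalerA -rmorphM mulfV ?gt_eqF // rmorph1 scale1r.
  rewrite p_scale; last exact: ltW.
  have := ler_wpM2l (ltW t0) (c_le _ _ (graph_scale t^-1 Hu)).
  rewrite mulrBr mulrA mulfV ?gt_eqF // mul1r; lra.
- have tp : 0 < - t by rewrite oppr_gt0.
  have -> : u + t%:C *: y = (- t)%:C *: ((- t)^-1%:C *: u - y).
    rewrite scalerBr scalerA -rmorphM mulfV ?gt_eqF // rmorph1 scale1r.
    by rewrite rmorphN scaleNr opprK.
  rewrite p_scale; last exact: ltW.
  have := ler_wpM2l (ltW tp) (c_ge _ _ (graph_scale (- t)^-1 Hu)).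
  rewrite mulrBr mulrA mulfV ?gt_eqF // mul1r; lra.
Qed.

End GraphExtension.

Theorem real_hahn_banach x : exists g : V -> R,
  [/\ forall t u v, g (t%:C *: u + v) = t * g u + g v,
      forall u, g u <= p u & g x = p x].
Proof.
have [G [gG Gmax]] := @Zorn_bigcup _ (fun G => dominated_linear_graph (G `|` line_graph x))
  (fun F FP tot => dominated_linear_graph_chain FP tot).
set H := G `|` line_graph x in gG.
have LH : line_graph x `<=` H by move=> z; right.
have H00 : H (0, 0).
  by apply: LH; exists 0; rewrite rmorph0 scale0r mul0r.
have total y : exists r, H (y, r).
  apply: contrapT => Hy; have [c [c_ge c_le]] := extension_slope y gG H00.
  have HH' : H `<=` graph_extend H y c.
    by move=> [u r] Hu; exists u, r, 0; rewrite rmorph0 scale0r addr0 mul0r addr0.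
  apply: (Gmax (graph_extend H y c)); last first.
    rewrite setUidl; last exact: subset_trans HH'.
    exact: dominated_graph_extend.
  split; first by move=> z Gz; apply: HH'; left.
  move=> extG; apply: Hy; exists c; left; apply: extG; exists 0, 0, 1.
  by rewrite rmorph1 scale1r add0r mul1r add0r.
have [Hf Hc Hd] := gG.
pose g u := projT1 (cid (total u)).
have Hg u : H (u, g u) := projT2 (cid (total u)).
exists g; split.
- by move=> t u v; apply: Hf (Hg _) (Hc _ _ _ _ t (Hg u) (Hg v)).
- by move=> u; exact: Hd (Hg u).
- by apply: Hf (Hg x) _; apply: LH; exists 1; rewrite rmorph1 scale1r mul1r.
Qed.

End RealHahnBanach.

Section ComplexHahnBanach.
Variables (R : realType) (V : lmodType R[i]) (q : V -> R).
Hypothesis q_add : forall a b, q (a + b) <= q a + q b.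
Hypothesis q_scale : forall c a, q (c *: a) <= complex.Re `|c| * q a.

Lemma Re_normc_real (t : R) : 0 <= t -> complex.Re `|t%:C| = t.
Proof. by move=> t0; rewrite ger0_norm ?ler0c. Qed.

Lemma seminorm_scale (t : R) a : 0 <= t -> q (t%:C *: a) = t * q a.
Proof.
move=> t0; apply/le_anti/andP; split.
  by have := q_scale t%:C a; rewrite Re_normc_real.
have [->|tn0] := eqVneq t 0.
  rewrite mul0r scale0r; have := q_scale 0 0; rewrite normr0 mul0r scale0r.
  by have := q_add 0 0; rewrite addr0; lra.
have tp : 0 < t by rewrite lt_def tn0.
rewrite -ler_pdivlMl //; have := q_scale (t^-1)%:C (t%:C *: a).
by rewrite scalerA -rmorphM mulVf // rmorph1 scale1r Re_normc_real // invr_ge0 ltW.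
Qed.

Lemma seminorm_ge0 a : 0 <= q a.
Proof.
have := q_add a ((-1) *: a); rewrite scaleN1r subrr -(scale0r a) -[0%R]/(0%:C).
rewrite seminorm_scale // mul0r.
by have := q_scale (-1) a; rewrite normrN normr1 scaleN1r mul1r; lra.
Qed.

Theorem complex_hahn_banach x : exists f : V -> R[i],
  [/\ linear_fun f, forall a, `|f a| <= (q a)%:C & complex.Re (f x) = q x].
Proof.
have [g [gl gq gx]] := real_hahn_banach q_add seminorm_scale x.
have g0 : g 0 = 0 by have := gl 1 0 0; rewrite scale1r addr0 mul1r; lra.
have gD u v : g (u + v) = g u + g v by have := gl 1 u v; rewrite rmorph1 scale1r mul1r.
have gZ (t : R) u : g (t%:C *: u) = t * g u by have := gl t u 0; rewrite !addr0 g0 addr0.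
have gz (z : R[i]) a : g (z *: a) = complex.Re z * g a + complex.Im z * g ('i *: a).
  have -> : z *: a = (complex.Re z)%:C *: a + (complex.Im z)%:C *: ('i *: a).
    by rewrite scalerA -scalerDl; congr (_ *: _); case: z => zr zi /=; simpc.
  by rewrite gD !gZ.
pose f a := g a +i* - g ('i *: a).
have fl : linear_fun f.
  move=> c a b; rewrite /f scalerDr scalerA !gD (gz c a) (gz ('i * c) a).
  case: c => cr ci /=; simpc; apply/eqP; rewrite eq_complex /=.
  by apply/andP; split; apply/eqP; ring.
exists f; split => // a.
set s := Num.sqrt (g a ^+ 2 + g ('i *: a) ^+ 2).
have -> : `|f a| = s%:C by rewrite normc_def /= sqrrN.
rewrite lecR; have [->|s0] := eqVneq s 0.
  exact: seminorm_ge0.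
have ss : s ^+ 2 = g a ^+ 2 + g ('i *: a) ^+ 2 by rewrite sqr_sqrtr // addr_ge0 ?sqr_ge0.
(* Rotating [a] by the unit scalar [l] turns [|f a|] into [g (l *: a) <= q (l *: a) <= q a]. *)
pose l : R[i] := (g a / s) +i* (g ('i *: a) / s).
have gl_s : g (l *: a) = s.
  rewrite gz /=; have -> : g a / s * g a + g ('i *: a) / s * g ('i *: a) = s ^+ 2 / s.
    by rewrite ss; field.
  by rewrite expr2 mulfK.
have nl : complex.Re `|l| = 1.
  by rewrite normc_def /= !expr_div_n -mulrDl -ss divff ?sqrtr1 // expf_neq0.
by rewrite -gl_s; apply: le_trans (gq _) _; have := q_scale l a; rewrite nl mul1r.
Qed.

End ComplexHahnBanach.

Lemma Re_normrK (R : realType) (W : normedZmodType R[i]) (v : W) :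
  (complex.Re `|v|)%:C = `|v|.
Proof. exact/RRe_real/ger0_real. Qed.

Section Separation.
Variables (R : realType) (V : normedModType R[i]) (M : set V).
Hypothesis M0 : M 0.
Hypothesis Mlin : forall c u v, M u -> M v -> M (c *: u + v).

Definition dist_to (a : V) : R := inf [set complex.Re `|a - m| | m in M].

Lemma dist_to_le a m : M m -> dist_to a <= complex.Re `|a - m|.
Proof.
move=> Mm; apply: ge_inf; last by exists m.
by exists 0 => _ [m' _ <-]; rewrite -ler0c Re_normrK.
Qed.

Lemma dist_to_ge0 a : 0 <= dist_to a.
Proof.
apply: lb_le_inf; first by exists (complex.Re `|a - 0|), 0.
by move=> _ [m _ <-]; rewrite -ler0c Re_normrK.
Qed.

Lemma dist_toD a b : dist_to (a + b) <= dist_to a + dist_to b.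
Proof.
rewrite -lerBlDr; apply: lb_le_inf; first by exists (complex.Re `|a - 0|), 0.
move=> _ [m1 M1 <-]; rewrite lerBlDr -lerBlDl.
apply: lb_le_inf; first by exists (complex.Re `|b - 0|), 0.
move=> _ [m2 M2 <-]; rewrite lerBlDl.
have M12 : M (m1 + m2) by have := Mlin 1 M1 M2; rewrite scale1r.
apply: le_trans (dist_to_le (a + b) M12) _.
rewrite opprD addrACA -lecR Re_normrK; have := ler_normD (a - m1) (b - m2).
by rewrite -[`|a - m1|]Re_normrK -[`|b - m2|]Re_normrK -rmorphD.
Qed.

Lemma dist_toZ c a : dist_to (c *: a) <= complex.Re `|c| * dist_to a.
Proof.
have [->|c0] := eqVneq c 0.
  by rewrite scale0r normr0 mul0r; have := dist_to_le 0 M0; rewrite subr0 normr0.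
have cp : 0 < complex.Re `|c| by rewrite -ltcR Re_normrK normr_gt0.
rewrite mulrC -ler_pdivrMr //; apply: lb_le_inf; first by exists (complex.Re `|a - 0|), 0.
move=> _ [m Mm <-]; rewrite ler_pdivrMr //.
have Mcm : M (c *: m) by have := Mlin c Mm M0; rewrite addr0.
apply: le_trans (dist_to_le (c *: a) Mcm) _.
rewrite -scalerBr -lecR Re_normrK normrZ mulrC.
by rewrite -[`|c|]Re_normrK -[`|a - m|]Re_normrK -rmorphM.
Qed.

Lemma dist_to_gt0 x : ~ closure M x -> 0 < dist_to x.
Proof.
move=> nc; rewrite lt_def dist_to_ge0 andbT; apply/eqP => d0; apply: nc.
move=> B /nbhs_ballP [e /= e0 sB].
have er : (complex.Re e)%:C = e by exact/RRe_real/ger0_real/ltW.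
have ep : 0 < complex.Re e by rewrite -ltcR er.
have [_ [m Mm <-] hm] : exists2 r, [set complex.Re `|x - m| | m in M] r & r < complex.Re e.
  by apply: inf_lt; [exists (complex.Re `|x - 0|), 0 | rewrite -/(dist_to x) d0].
by exists m; split => //; apply: sB; rewrite -ball_normE /= -Re_normrK -er ltcR.
Qed.

Theorem separating_functional x : ~ closure M x -> exists f : V -> R[i],
  [/\ linear_fun f, forall a, `|f a| <= `|a|, forall m, M m -> f m = 0 & f x != 0].
Proof.
move=> nc; have [f [fl fb fx]] := complex_hahn_banach dist_toD dist_toZ x.
exists f; split => //.
- move=> a; apply: le_trans (fb a) _.
  by have := dist_to_le a M0; rewrite subr0 -lecR Re_normrK.
- move=> m Mm; have := fb m; have := dist_to_le m Mm.
  rewrite subrr normr0 /= => dm; rewrite (_ : dist_to m = 0) ?normr_le0 => [/eqP //|].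
  by apply/le_anti; rewrite dm dist_to_ge0.
- by apply/eqP => fx0; have := dist_to_gt0 nc; rewrite -fx fx0 ltxx.
Qed.

End Separation.

Section Bidual.
Variables (R : realType) (A : normedModType R[i]).
Local Notation K := R[i].

Lemma in_dual0 : in_dual (0 : A -> K).
Proof.
split; first by move=> c x y; rewrite /= mulr0 addr0.
by exists 0 => a; rewrite normr0 mul0r.
Qed.

Lemma dual_bound_norm (f : A -> K) N : dual_bound f N -> dual_bound f `|N|.
Proof.
move=> fN a; apply: le_trans (fN a) _.
by rewrite -[leLHS]ger0_norm ?(le_trans _ (fN a)) // normrM normr_id.
Qed.

Lemma in_dual_lin (c : K) (f g : A -> K) :
  in_dual f -> in_dual g -> in_dual (c *: f + g).
Proof.
move=> [lf [N1 b1]] [lg [N2 b2]].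
have cfg z : (c *: f + g) z = c * f z + g z by [].
split; first by move=> e x y; rewrite !cfg lf lg; ring.
exists (`|c| * `|N1| + `|N2|) => a; rewrite cfg.
apply: le_trans (ler_normD _ _) _; rewrite normrM mulrDl -mulrA.
by apply: lerD; [apply: ler_wpM2l => // |]; apply: (dual_bound_norm _ a).
Qed.

Lemma in_dualZ (c : K) (f : A -> K) : in_dual f -> in_dual (c *: f).
Proof. by move=> hf; have := in_dual_lin c hf in_dual0; rewrite addr0. Qed.

Lemma continuous_linear_in_dual (f : A -> K^o) :
  linear_fun f -> continuous f -> in_dual f.
Proof.
move=> lf cf; split => //.
have := cf 0; rewrite /continuous_at (linear_fun0 lf).
move=> /cvgr0_norm_lt /(_ 1 ltr01) /nbhs_norm0P [e /= e0 He].
exists (2 / e) => a; have [->|a0] := eqVneq a 0; first by rewrite linear_fun0 // !normr0 mulr0.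
have a_gt0 : 0 < `|a| by rewrite normr_gt0.
(* Rescale [a] into the ball of radius [e] on which [|f| < 1]. *)
pose k := e / (2 * `|a|).
have k_gt0 : 0 < k by rewrite divr_gt0 // mulr_gt0.
have ka_lt_e : `|k *: a| < e.
  rewrite normrZ gtr0_norm // (_ : k * `|a| = e / 2); last by rewrite /k; field; rewrite gt_eqF.
  by rewrite ltr_pdivrMr ?ltr0n // ltr_pMr // ltr1n.
have := He _ ka_lt_e; rewrite /= (linear_funZ lf) normrM gtr0_norm // => kfa.
have : `|f a| < k^-1 by rewrite -(ltr_pM2l k_gt0) mulfV ?gt_eqF.
by rewrite /k invf_div mulrAC => /ltW.
Qed.

Definition bidual_embed (a : A) : (A -> K) -> K :=
  fun f => if `[< in_dual f >] then f a else 0.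

Lemma bidual_embedE a (f : A -> K) : in_dual f -> bidual_embed a f = f a.
Proof. by move=> h; rewrite /bidual_embed asboolT. Qed.

Lemma in_bidual_embed a : in_bidual (bidual_embed a).
Proof.
split.
- by move=> c f g hf hg; rewrite !bidual_embedE //; exact: in_dual_lin.
- by exists `|a| => f N hf N0 hb; rewrite bidual_embedE // mulrC.
- by move=> f hf; rewrite /bidual_embed asboolF.
Qed.

Section BidualElement.
Variables (F : (A -> K) -> K) (hF : in_bidual F).

Lemma bidual_fun0 : F 0 = 0.
Proof.
have [hl _ _] := hF; have := hl 1 0 0 in_dual0 in_dual0.
rewrite scale1r addr0 mul1r => /eqP; rewrite -subr_eq subrr eq_sym => /eqP //.
Qed.

Lemma bidual_funZ c (f : A -> K) : in_dual f -> F (c *: f) = c * F f.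
Proof.
have [hl _ _] := hF => hf; have := hl c f 0 hf in_dual0.
by rewrite !addr0 bidual_fun0 addr0.
Qed.

Lemma bidual_funD (f g : A -> K) : in_dual f -> in_dual g -> F (f + g) = F f + F g.
Proof. by have [hl _ _] := hF => hf hg; have := hl 1 f g hf hg; rewrite scale1r mul1r. Qed.

End BidualElement.

Variable mA : A -> A -> A.

Lemma arens1E (F G : (A -> K) -> K) (f : A -> K) : in_dual f ->
  arens1 mA F G f = F (fun a => G (fun b => f (mA a b))).
Proof. by move=> h; rewrite /arens1 asboolT. Qed.

Section ArensProduct.
Variables (F G : (A -> K) -> K) (hF : in_bidual F) (hG : in_bidual G).

Lemma arens1_annihilator (f : A -> K) : in_dual f ->
  (forall a b, f (mA a b) = 0) -> arens1 mA F G f = 0.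
Proof.
move=> hf f0; rewrite arens1E //.
rewrite (_ : (fun a => _) = 0) ?(bidual_fun0 hF) //; apply: funext => a.
by rewrite (_ : (fun b => _) = 0) ?(bidual_fun0 hG) //; apply: funext => b.
Qed.

Lemma arens1_character (chi : A -> K) : in_dual chi ->
  (forall a b, chi (mA a b) = chi a * chi b) ->
  arens1 mA F G chi = F chi * G chi.
Proof.
move=> hchi chiM; rewrite arens1E //.
rewrite (_ : (fun a => _) = G chi *: chi) ?(bidual_funZ hF) 1?mulrC //.
apply: funext => a; rewrite (_ : (fun b => _) = chi a *: chi) ?(bidual_funZ hG) //.
  by apply: mulrC.
by apply: funext => b; rewrite chiM.
Qed.

Lemma arens1_point_derivation (chi delta : A -> K) : in_dual chi -> in_dual delta ->
  (forall a b, delta (mA a b) = delta a * chi b + chi a * delta b) ->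
  arens1 mA F G delta = F delta * G chi + F chi * G delta.
Proof.
move=> hchi hdelta deltaD; rewrite arens1E //.
have inner a : G (fun b => delta (mA a b)) = G chi * delta a + G delta * chi a.
  rewrite (_ : (fun b => _) = delta a *: chi + chi a *: delta); last first.
    by apply: funext => b; rewrite deltaD.
  by rewrite (bidual_funD hG (in_dualZ _ hchi) (in_dualZ _ hdelta)) !(bidual_funZ hG) //; ring.
rewrite (_ : (fun a => _) = G chi *: delta + G delta *: chi); last by apply: funext => a; exact: inner.
by rewrite (bidual_funD hF (in_dualZ _ hdelta) (in_dualZ _ hchi)) !(bidual_funZ hF) //; ring.
Qed.

End ArensProduct.
End Bidual.

Lemma rank_one_banach_mul (R : realType) (B : normedModType R[i]) (chi : B -> R[i])
    (N m : R[i]) (b0 : B) :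
  linear_fun chi -> 0 <= N -> dual_bound chi N -> `|m| * (N ^+ 2 * `|b0|) <= 1 ->
  banach_mul (fun x y => (m * chi x * chi y) *: b0).
Proof.
move=> lchi N0 chiN mN; split.
- by move=> c x y z; rewrite lchi scalerA -scalerDl; congr (_ *: _); ring.
- by move=> c x y z; rewrite lchi scalerA -scalerDl; congr (_ *: _); ring.
- by move=> x y z; rewrite !(linear_funZ lchi); congr (_ *: _); ring.
move=> x y; rewrite normrZ !normrM.
apply: le_trans (_ : `|m| * (N * `|x|) * (N * `|y|) * `|b0| <= _).
  apply: ler_wpM2r => //; apply: ler_pM => //; exact: ler_wpM2l.
rewrite (_ : _ * `|b0| = `|m| * (N ^+ 2 * `|b0|) * (`|x| * `|y|)); last by ring.
by apply: ler_piMl => //; rewrite mulr_ge0.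
Qed.

Section SpanProducts.
Variables (R : realType) (A : normedModType R[i]) (mA : A -> A -> A).

Lemma span_products0 : span_products mA 0.
Proof. by exists 0%N, (fun _ => 0), (fun _ => 0), (fun _ => 0); rewrite big_ord0. Qed.

Lemma span_products_mul a b : span_products mA (mA a b).
Proof. by exists 1%N, (fun _ => 1), (fun _ => a), (fun _ => b); rewrite big_ord1 scale1r. Qed.

Lemma span_products_lin c u v : span_products mA u -> span_products mA v ->
  span_products mA (c *: u + v).
Proof.
move=> [n [c1 [a1 [b1 ->]]]] [m [c2 [a2 [b2 ->]]]].
pose glue T (s : 'I_n -> T) (t : 'I_m -> T) i :=
  match fintype.split i with inl j => s j | inr j => t j end.
exists (n + m)%N, (glue _ (fun j => c * c1 j) c2), (glue _ a1 a2), (glue _ b1 b2).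
rewrite big_split_ord /= scaler_sumr; congr (_ + _); apply: eq_bigr => i _.
  by rewrite /glue (unsplitK (inl _ i)) scalerA.
by rewrite /glue (unsplitK (inr _ i)).
Qed.

End SpanProducts.

Section BidualSuperWeakAmenability.
Variables (R : realType) (A : completeNormedModType R[i]) (mA : A -> A -> A).
Local Notation K := R[i].
Hypothesis hsw : bidual_swa mA.

(* Super weak amenability is applied with [B := A] carrying the rank-one
   product of [rank_one_banach_mul], [phi(F) := (c F(chi)) b0] and
   [<d(F), b> := F(delta) chi(b)]. *)
Lemma bidual_swa_rank_one (chi delta : A -> K) (N Nd m c : K) (b0 : A) :
  linear_fun chi -> 0 <= N -> dual_bound chi N -> chi b0 = 1 ->
  linear_fun delta -> 0 <= Nd -> dual_bound delta Nd ->
  `|m| * (N ^+ 2 * `|b0|) <= 1 ->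
  (forall F G, in_bidual F -> in_bidual G ->
     arens1 mA F G chi = m * c * F chi * G chi) ->
  (forall F G, in_bidual F -> in_bidual G ->
     arens1 mA F G delta = m * c * (F delta * G chi + F chi * G delta)) ->
  forall x y, c * (delta x * chi y + delta y * chi x) = 0.
Proof.
move=> lchi N0 chiN chib0 ldelta Nd0 deltaN mN chiM deltaM x y.
have hchi : in_dual chi by split => //; exists N.
have hdelta : in_dual delta by split => //; exists Nd.
have chiZ s : chi (s *: b0) = s by rewrite (linear_funZ lchi) chib0 mulr1.
pose phiB F : A := (c * F chi) *: b0.
pose dB F b : K := F delta * chi b.
have phiB_lin c' F G : in_bidual F -> in_bidual G ->
    phiB (c' *: F + G) = c' *: phiB F + phiB G.
  by move=> _ _; rewrite /phiB scalerA -scalerDl; congr (_ *: _); rewrite /= mulrDr mulrCA.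
have phiB_mul F G : in_bidual F -> in_bidual G ->
    phiB (arens1 mA F G) = (m * chi (phiB F) * chi (phiB G)) *: b0.
  by move=> hF hG; rewrite /phiB chiM // !chiZ; congr (_ *: _); ring.
have phiB_bd : exists C, forall F M, in_bidual F -> bidual_bound F M -> `|phiB F| <= C * M.
  exists (`|c| * N * `|b0|) => F M _ FM; rewrite normrZ normrM.
  rewrite (_ : _ * M = `|c| * (M * N) * `|b0|); last by ring.
  by apply: ler_wpM2r => //; apply: ler_wpM2l => //; exact: FM.
have dB_lin c' F G b : in_bidual F -> in_bidual G ->
    dB (c' *: F + G) b = c' * dB F b + dB G b.
  by move=> _ _; rewrite /dB /= mulrDl mulrA.
have dB_lin2 F c' b b' : in_bidual F -> dB F (c' *: b + b') = c' * dB F b + dB F b'.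
  by move=> _; rewrite /dB lchi; ring.
have dB_bd : exists C, forall F M b, in_bidual F -> bidual_bound F M ->
    `|dB F b| <= C * M * `|b|.
  exists (Nd * N) => F M b _ FM; rewrite /dB normrM.
  rewrite (_ : _ * `|b| = (M * Nd) * (N * `|b|)); last by ring.
  by apply: ler_pM => //; exact: FM.
have dB_der F G b : in_bidual F -> in_bidual G ->
    dB (arens1 mA F G) b = dB F ((m * chi (phiB G) * chi b) *: b0)
                         + dB G ((m * chi b * chi (phiB F)) *: b0).
  by move=> hF hG; rewrite /dB deltaM // !chiZ; ring.
have := hsw (rank_one_banach_mul lchi N0 chiN mN) phiB_lin phiB_mul phiB_bd
  dB_lin dB_lin2 dB_bd dB_der (in_bidual_embed x) (in_bidual_embed y).
by rewrite /dB /phiB !chiZ !bidual_embedE // => <-; ring.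
Qed.

Lemma bidual_swa_functional (chi delta : A -> K) (kappa : K) :
  in_dual chi -> in_dual delta ->
  (forall F G, in_bidual F -> in_bidual G ->
     arens1 mA F G chi = kappa * F chi * G chi) ->
  (forall F G, in_bidual F -> in_bidual G ->
     arens1 mA F G delta = kappa * (F delta * G chi + F chi * G delta)) ->
  forall x y, delta x * chi y + delta y * chi x = 0.
Proof.
move=> [lchi [N chiN]] [ldelta [Nd deltaN]] chiM deltaM x y.
have [chi0|/existsNP [a0 /eqP chia0]] := pselect (forall z, chi z = 0).
  by rewrite !chi0 !mulr0 addr0.
have [b0 chib0] := linear_fun_normalize lchi chia0.
(* [c] is chosen large enough for [m := kappa / c] to make the rank-one product submultiplicative. *)
pose c := 1 + `|kappa| * (`|N| ^+ 2 * `|b0|).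
have c_gt0 : 0 < c by rewrite ltr_wpDr ?mulr_ge0 ?exprn_ge0.
have mc : kappa / c * c = kappa by rewrite mulfVK ?gt_eqF.
have mN : `|kappa / c| * (`|N| ^+ 2 * `|b0|) <= 1.
  rewrite normrM normfV (gtr0_norm c_gt0) mulrAC ler_pdivrMr // mul1r.
  by rewrite ler_wpDl.
have /eqP : c * (delta x * chi y + delta y * chi x) = 0.
  apply: (bidual_swa_rank_one lchi (normr_ge0 N) (dual_bound_norm chiN) chib0
    ldelta (normr_ge0 Nd) (dual_bound_norm deltaN) mN) => F G hF hG; rewrite mc.
  - exact: chiM.
  - exact: deltaM.
by rewrite mulf_eq0 gt_eqF //= => /eqP.
Qed.

Lemma bidual_swa_point_derivation_eq0 (chi delta : A -> K) :
  in_dual chi -> in_dual delta ->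
  (forall a b, chi (mA a b) = chi a * chi b) -> (exists a, chi a != 0) ->
  (forall a b, delta (mA a b) = delta a * chi b + chi a * delta b) ->
  forall a, delta a = 0.
Proof.
move=> hchi hdelta chiM [a0 chia0] deltaD.
have [b0 chib0] := linear_fun_normalize (proj1 hchi) chia0.
have key : forall x y, delta x * chi y + delta y * chi x = 0.
  apply: (bidual_swa_functional (kappa := 1)) => // F G hF hG; rewrite mul1r.
  - exact: arens1_character.
  - exact: arens1_point_derivation.
have delta_b0 : delta b0 = 0.
  by have /eqP := key b0 b0; rewrite chib0 mulr1 -mulr2n mulrn_eq0 => /eqP.
by move=> a; have := key a b0; rewrite delta_b0 mul0r addr0 chib0 mulr1.
Qed.

Lemma bidual_swa_closure_span_products : closure (span_products mA) = setT.
Proof.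
apply/seteqP; split => // x _; apply: contrapT => x_notin.
have [f [lf bf f0 fx]] := separating_functional (span_products0 mA) (@span_products_lin _ _ mA) x_notin.
have hf : in_dual f by split => //; exists 1 => a; rewrite mul1r.
have f_arens0 F G : in_bidual F -> in_bidual G -> arens1 mA F G f = 0.
  by move=> hF hG; apply: arens1_annihilator => // a b; apply/f0/span_products_mul.
have /eqP : f x * f x + f x * f x = 0.
  by apply: (bidual_swa_functional (kappa := 0)) => // F G hF hG; rewrite !mul0r; exact: f_arens0.
by rewrite -mulr2n mulrn_eq0 mulf_eq0 orbb (negbTE fx).
Qed.

End BidualSuperWeakAmenability.

Close Scope complex_scope.
Unset Implicit Arguments.

Theorem theorem4p2 (R : realType) (A : completeNormedModType R[i])
    (mA : A -> A -> A) :
  banach_mul mA ->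
  bidual_swa mA ->
  closure (span_products mA) = setT /\
  (forall phi : A -> R[i]^o,
     linear_fun phi -> continuous phi ->
     (forall a b, phi (mA a b) = phi a * phi b) ->
     (exists a, phi a != 0) ->
   forall d : A -> R[i]^o,
     linear_fun d -> continuous d ->
     (forall a b, d (mA a b) = d a * phi b + phi a * d b) ->
   forall a, d a = 0).
Proof.
move=> _ hsw; split; first exact: bidual_swa_closure_span_products.
move=> phi lphi cphi phiM phi_nz d ld cd dD.
by apply: (bidual_swa_point_derivation_eq0 hsw) => //; exact: continuous_linear_in_dual.
Qed.
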